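(* Let $p \equiv 1 \pmod 4$ be a prime, let $\ell \neq p$ be a prime, and let $\alpha, \beta \colon \mathbf{F}_p^{\boxtimes} \to \mathbf{Z}/\ell$ be voltage assignments. Suppose the adjacency spectra of the covers $X^\alpha$ and $X^\beta$ coincide, i.e. $\{\theta^\alpha_{a,k}\}_{a \in \mathbf{F}_p,\, k \in \mathbf{Z}/\ell} = \{\theta^\beta_{a,k}\}_{a \in \mathbf{F}_p,\, k \in \mathbf{Z}/\ell}$ as multisets. Then there exists $n \in (\mathbf{Z}/\ell)^\times$ such that $X^\alpha$ and $X^{n\beta}$ are isomorphic as $\mathbf{Z}/\ell$-covering graphs. In particular, $X^\alpha$ and $X^\beta$ are isomorphic as graphs.
   Context: For a finite field $\mathbf{F}_q$ of characteristic $p$ with $q = p^r \equiv 1 \pmod 4$, let $\mathbf{F}_q^{\boxtimes} = \{x^2 : x \in \mathbf{F}_q^\times\}$ be the set of nonzero squares (it contains $-1$). The Paley graph $X(\mathbf{F}_q)$ has vertex set $\mathbf{F}_q$ with $x$ adjacent to $y$ iff $y - x \in \mathbf{F}_q^{\boxtimes}$. Fix a prime $\ell \neq p$. A voltage assignment is a function $\alpha \colon \mathbf{F}_q^{\boxtimes} \to \mathbf{Z}/\ell$ that is not identically zero and satisfies $\alpha(-s) = -\alpha(s)$ for all $s \in \mathbf{F}_q^{\boxtimes}$. The translation invariant $\mathbf{Z}/\ell$-cover $X^\alpha$ is the graph with vertex set $\mathbf{F}_q \times \mathbf{Z}/\ell$ and an edge between $(x,i)$ and $(y,j)$ iff $y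 - x \in \mathbf{F}_q^{\boxtimes}$ and $j - i = \alpha(y-x)$; equivalently it is the Cayley graph of $\mathbf{F}_q^+ \times \mathbf{Z}/\ell$ with respect to $S^\alpha = \{(s, \alpha(s)) : s \in \mathbf{F}_q^{\boxtimes}\}$. It comes with the projection $(x,i) \mapsto x$ to $X(\mathbf{F}_q)$ and the action of $\mathbf{Z}/\ell$ by $j \cdot (x,i) = (x, i+j)$. For $n \in (\mathbf{Z}/\ell)^\times$, $n\alpha$ denotes the voltage assignment $s \mapsto n\alpha(s)$. An isomorphism of $\mathbf{Z}/\ell$-covering graphs $X^\alpha \to X^\beta$ is a graph isomorphism $f$ with $f(x, i+j) = f(x,i) + (0,j)$ for all $x, i, j$ (so it induces a map on the base $X(\mathbf{F}_q)$ compatible with the projections). Let $\zeta_p = e^{2\pi i/p}$, $\zeta_\ell = e^{2\pi i/\ell}$, and $\mathrm{tr} \colon \mathbf{F}_q \to \mathbf{F}_p$, $\mathrm{tr}(x) = x + x^p + \dots + x^{p^{r-1}}$. For $a \in \mathbf{F}_q$ and $k \in \mathbf{Z}/\ell$ set $\theta^\alpha_{a,k} = \sum_{s \in \mathbf{F}_q^{\boxtimes}} \zeta_p^{\mathrm{tr}(as)} \zeta_\ell^{k\alpha(s)}$; the multiset $\{\theta^\alpha_{a,k}\}_{a \in \mathbf{F}_q, k \in \mathbf{Z}/\ell}$ is the multiset of eigenvalues of the adjacency matrix of $X^\alpha$. *)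

From HB Require Import structures.
From mathcomp Require Import all_boot all_order all_algebra all_field.
Set Implicit Arguments. Unset Strict Implicit. Unset Printing Implicit Defensive.
Import Order.TTheory GRing.Theory Num.Theory.
Local Open Scope ring_scope.

(* zeta n = e^{2 pi i / n} in algC : n.-root (-1) is the n-th root of -1 with
   maximal real part and nonnegative imaginary part, i.e. e^{i pi / n}. *)
Definition zeta (n : nat) : algC := (n.-root (-1)) ^+ 2.

Definition is_sq (p : nat) (x : 'F_p) : bool :=
  (x != 0) && [exists y : 'F_p, y ^+ 2 == x].

(* voltage assignment F_p^squares -> Z/l, encoded as a function on F_p whose
   values outside the squares are irrelevant *)
Definition voltage (p l : nat) (alpha : 'F_p -> 'Z_l) : Prop :=
  (exists s : 'F_p, is_sq s /\ alpha s != 0) /\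
  (forall s : 'F_p, is_sq s -> alpha (- s) = - alpha s).

Definition cover_adj (p l : nat) (alpha : 'F_p -> 'Z_l)
  (u v : 'F_p * 'Z_l) : bool :=
  is_sq (v.1 - u.1) && (v.2 - u.2 == alpha (v.1 - u.1)).

(* theta^alpha_{a,k} = sum_{s square} zeta_p^{a s} zeta_l^{k alpha(s)}  (r = 1, tr = id) *)
Definition theta (p l : nat) (alpha : 'F_p -> 'Z_l) (a : 'F_p) (k : 'Z_l) : algC :=
  \sum_(s : 'F_p | is_sq s)
     zeta p ^+ (nat_of_ord (a * s)) * zeta l ^+ (nat_of_ord (k * alpha s)).

Definition spectrum (p l : nat) (alpha : 'F_p -> 'Z_l) : seq algC :=
  [seq theta alpha x.1 x.2 | x : 'F_p * 'Z_l].

Definition graph_iso (V : finType) (e1 e2 : rel V) (f : V -> V) : Prop :=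
  bijective f /\ forall u v, e1 u v = e2 (f u) (f v).

Definition cover_iso (p l : nat) (alpha beta : 'F_p -> 'Z_l)
  (f : 'F_p * 'Z_l -> 'F_p * 'Z_l) : Prop :=
  graph_iso (cover_adj alpha) (cover_adj beta) f /\
  forall (x : 'F_p) (i j : 'Z_l), f (x, i + j) = ((f (x, i)).1, (f (x, i)).2 + j).

Definition scale_voltage (p l : nat) (n : 'Z_l) (beta : 'F_p -> 'Z_l) : 'F_p -> 'Z_l :=
  fun s => n * beta s.

(* The eigenvalue theta^alpha_{1,1} of X^alpha is some theta^beta_{a,k} of
   X^beta.  Both are Q(zeta_l)-linear combinations of the p-th roots of unity
   zeta_p^i, i in F_p, and since Gal(Q(zeta_pl)/Q(zeta_l)) permutes the
   nontrivial p-th roots of unity transitively, the coefficients of the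
   difference do not depend on i.  Comparing the coefficients at a square and
   at a non-square forces a != 0; comparing them at 0 and at every i then
   shows that s |-> s/a preserves the squares and that alpha(s) = k beta(s/a)
   on squares.  Hence (x, i) |-> (x/a, i) is an isomorphism of covers
   X^alpha -> X^{k beta}, and rescaling the fibres by k^-1 turns it into a
   graph isomorphism X^alpha -> X^beta. *)
From HB Require Import structures.
From mathcomp Require Import all_boot all_order all_algebra all_field.
Set Implicit Arguments. Unset Strict Implicit. Unset Printing Implicit Defensive.
Import Order.TTheory GRing.Theory Num.Theory.
Local Open Scope ring_scope.

Lemma val_Fp_lt p (x : 'F_p) : prime p -> (val x < p)%N.
Proof. by move=> pr; case: x => /= x; rewrite (Fp_cast pr). Qed.

Lemma val_FpD p (x y : 'F_p) : prime p -> val (x + y) = ((val x + val y) %% p)%N.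
Proof. by move=> pr; rewrite /=; congr modn; exact: Fp_cast. Qed.

Lemma val_FpM p (x y : 'F_p) : prime p -> val (x * y) = ((val x * val y) %% p)%N.
Proof. by move=> pr; rewrite /=; congr modn; exact: Fp_cast. Qed.

Lemma val_Fp1 p : prime p -> val (1 : 'F_p) = 1%N.
Proof. by move=> pr; rewrite /= Fp_cast // modn_small // prime_gt1. Qed.

Lemma Zp_unit_prime l (k : 'Z_l) : prime l -> k != 0 -> k \is a GRing.unit.
Proof.
move=> pr_l k_neq0; have l_gt1 := prime_gt1 pr_l.
rewrite -[k]natr_Zp unitZpE // prime_coprime // gtnNdvd //.
  by rewrite lt0n; apply: contra k_neq0 => /eqP k0; apply/eqP/val_inj.
by case: (k) => /= z; rewrite Zp_cast.
Qed.

Lemma zeta_expn {n} : (0 < n)%N -> zeta n ^+ n = 1.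
Proof. by move=> n_gt0; rewrite /zeta exprAC rootCK // sqrrN expr1n. Qed.

Lemma zeta_neq1 {n} : (1 < n)%N -> zeta n != 1.
Proof.
move=> n_gt1; have n_gt0 : (0 < n)%N by exact: ltnW.
apply/eqP => /eqP; rewrite /zeta -subr_eq0 subr_sqr_1 mulf_eq0 !subr_eq0.
case/orP => /eqP root_eq.
  have := @rootCK algC _ n_gt0 (-1); rewrite root_eq expr1n => /eqP.
  rewrite -addr_eq0 => /eqP two_eq0.
  by have := pnatr_eq0 algC 2; rewrite (natrD _ 1 1) two_eq0 eqxx.
move/eqP: root_eq; rewrite addr_eq0 => /eqP root_eq.
by have := @rootC_lt0 algC _ (-1) n_gt1; rewrite root_eq ltrN10.
Qed.

Lemma zeta_prim_root {n} : prime n -> n.-primitive_root (zeta n).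
Proof.
move=> pr_n; have n_gt0 := prime_gt0 pr_n.
have [m m_prim m_dvd] := prim_order_exists n_gt0 (zeta_expn n_gt0).
case/primeP: pr_n => n_gt1 /(_ m m_dvd) /orP[] /eqP m_eq; last by rewrite m_eq in m_prim.
have := prim_expr_order m_prim; rewrite m_eq expr1 => zeta1.
by have := zeta_neq1 n_gt1; rewrite zeta1 eqxx.
Qed.

Lemma zeta_expn_neq0 l n : prime l -> zeta l ^+ n != 0.
Proof.
move=> pr_l; rewrite expf_neq0 //; apply/eqP => zeta0.
have := zeta_expn (prime_gt0 pr_l); rewrite zeta0 expr0n gtn_eqF ?prime_gt0 //.
by move/esym/eqP; rewrite oner_eq0.
Qed.

Lemma zeta_expn_Zp_inj l (x y : 'Z_l) :
  prime l -> zeta l ^+ val x = zeta l ^+ val y -> x = y.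
Proof.
move=> pr_l /eqP; rewrite (eq_prim_root_expr (zeta_prim_root pr_l)) => /eqP.
have val_lt (z : 'Z_l) : (val z < l)%N by case: z => /= z; rewrite Zp_cast ?prime_gt1.
by rewrite !modn_small // => /val_inj.
Qed.

Definition zeta_fixed (l : nat) (x : algC) : Prop :=
  forall u : {rmorphism algC -> algC}, u (zeta l) = zeta l -> u x = x.

Section AdditiveCharacter.
Variable p : nat.
Hypothesis pr_p : prime p.

Definition addchar (t : 'F_p) : algC := zeta p ^+ val t.

Let zeta_p_expp : zeta p ^+ p = 1. Proof. exact: zeta_expn (prime_gt0 pr_p). Qed.

Lemma addchar0 : addchar 0 = 1. Proof. by rewrite /addchar expr0. Qed.

Lemma addcharD s t : addchar (s + t) = addchar s * addchar t.
Proof. by rewrite /addchar val_FpD // expr_mod // exprD. Qed.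

Lemma addcharM s t : addchar (s * t) = zeta p ^+ (val s * val t).
Proof. by rewrite /addchar val_FpM // expr_mod. Qed.

Lemma sum_addchar : \sum_(m : 'F_p) addchar m = 0.
Proof.
set S := \sum_(m : 'F_p) addchar m.
have shift1 : addchar 1 * S = S.
  rewrite /S mulr_sumr [RHS](reindex_inj (addrI 1)) /=.
  by apply: eq_bigr => m _; rewrite addcharD.
have : (zeta p - 1) * S = 0.
  by rewrite mulrBl mul1r -[X in _ - X]shift1 /addchar val_Fp1 // expr1 subrr.
move/eqP; rewrite mulf_eq0 subr_eq0 (negbTE (zeta_neq1 (prime_gt1 pr_p))).
by move/eqP.
Qed.

Lemma sum_addcharM t :
  \sum_(m : 'F_p) addchar (m * t) = if t == 0 then p%:R else 0.
Proof.
have [->|t_neq0] := eqVneq t 0.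
  by under eq_bigr do rewrite mulr0 addchar0; rewrite sumr_const card_Fp.
by rewrite -[RHS]sum_addchar [RHS](reindex_inj (mulIf t_neq0)).
Qed.

Variable l : nat.
Hypothesis pr_l : prime l.
Hypothesis l_neq_p : l != p.

(* Witnessed by the automorphism of Q(zeta_pl) sending zeta_p to zeta_p^m and
   fixing zeta_l, given by an exponent k with k = m mod p and k = 1 mod l. *)
Lemma sum_fixed_addchar_dilate (D : 'F_p -> algC) :
  (forall i, zeta_fixed l (D i)) -> \sum_i D i * addchar i = 0 ->
  forall m, m != 0 -> \sum_i D i * addchar (m * i) = 0.
Proof.
move=> D_fixed D_sum m m_neq0.
have cop_pl : coprime p l by rewrite prime_coprime // dvdn_prime2 // eq_sym.
set k := chinese p l (val m) 1.
have k_modp : (k %% p = val m)%N by rewrite chinese_modl // modn_small // val_Fp_lt.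
have k_modl : (k %% l = 1)%N by rewrite chinese_modr // modn_small // prime_gt1.
have cop_k : coprime k (p * l).
  rewrite coprimeMr; apply/andP; split; rewrite coprime_sym -coprime_modr.
    rewrite k_modp prime_coprime // gtnNdvd ?val_Fp_lt // lt0n.
    by apply: contra m_neq0 => /eqP m0; apply/eqP/val_inj.
  by rewrite k_modl coprimen1.
have [u uE] := Qn_aut_exists cop_k.
have u_zeta_l : u (zeta l) = zeta l.
  rewrite uE; last by rewrite mulnC exprM zeta_expn ?prime_gt0 // expr1n.
  by rewrite -(expr_mod _ (zeta_expn (prime_gt0 pr_l))) k_modl expr1.
have u_addchar i : u (addchar i) = addchar (m * i).
  rewrite /addchar rmorphXn uE ?exprM ?zeta_p_expp ?expr1n // -exprM.
  by rewrite val_FpM // -k_modp modnMml expr_mod.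
have := congr1 u D_sum; rewrite rmorph0 rmorph_sum => u_sum.
by rewrite -[RHS]u_sum; apply: eq_bigr => i _; rewrite rmorphM D_fixed // u_addchar.
Qed.

(* Multiply the vanishing combinations of the previous lemma by zeta_p^(-mj)
   and sum over m: orthogonality isolates p D_j, independently of j. *)
Lemma sum_fixed_addchar_eq0 (D : 'F_p -> algC) :
  (forall i, zeta_fixed l (D i)) -> \sum_i D i * addchar i = 0 ->
  forall j, D j = D 0.
Proof.
move=> D_fixed D_sum.
have dilate := @sum_fixed_addchar_dilate D D_fixed D_sum.
suff pD j : p%:R * D j = \sum_i D i.
  move=> j; apply: (mulfI (_ : p%:R != 0 :> algC)); last by rewrite !pD.
  by rewrite pnatr_eq0 -lt0n prime_gt0.
pose X := \sum_(m : 'F_p) addchar (m * - j) * \sum_i D i * addchar (m * i).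
have X_sumD : X = \sum_i D i.
  rewrite /X (bigD1 0) //= [X in _ + X]big1 ?addr0 => [|m m_neq0]; last by rewrite dilate ?mulr0.
  by rewrite mul0r addchar0 mul1r; under eq_bigr do rewrite mul0r addchar0 mulr1.
rewrite -X_sumD /X; under eq_bigr do rewrite mulr_sumr.
rewrite exchange_big /=.
have inner i : \sum_(m : 'F_p) addchar (m * - j) * (D i * addchar (m * i))
    = D i * (if i - j == 0 then p%:R else 0).
  rewrite -sum_addcharM mulr_sumr; apply: eq_bigr => m _.
  by rewrite mulrDr addcharD mulrCA [_ * addchar _]mulrC.
under eq_bigr do rewrite inner subr_eq0.
rewrite (bigD1 j) //= eqxx [X in _ + X]big1 ?addr0 1?mulrC // => i /negbTE ->.
by rewrite mulr0.
Qed.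

End AdditiveCharacter.

Definition theta_coef (p l : nat) (g : 'F_p -> 'Z_l) (a : 'F_p) (k : 'Z_l) (i : 'F_p)
  : algC := \sum_(s | is_sq s && (a * s == i)) zeta l ^+ val (k * g s).

Lemma thetaE p l (g : 'F_p -> 'Z_l) a k :
  theta g a k = \sum_i theta_coef g a k i * addchar i.
Proof.
rewrite /theta (partition_big (fun s => a * s) xpredT) //.
apply: eq_bigr => i _; rewrite mulr_suml.
by apply: eq_bigr => s /andP[_ /eqP <-]; rewrite mulrC.
Qed.

Lemma theta_coef_fixed p l (g : 'F_p -> 'Z_l) a k i : zeta_fixed l (theta_coef g a k i).
Proof.
by move=> u u_zeta; rewrite rmorph_sum; apply: eq_bigr => s _; rewrite rmorphXn u_zeta.
Qed.

Lemma theta_coef_unit p l (g : 'F_p -> 'Z_l) a k i : a != 0 ->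
  theta_coef g a k i =
    if is_sq (a^-1 * i) then zeta l ^+ val (k * g (a^-1 * i)) else 0.
Proof.
move=> a_neq0; rewrite /theta_coef.
rewrite (eq_bigl (fun s => (s == a^-1 * i) && is_sq s)) => [|s]; last first.
  by rewrite andbC (can2_eq (mulKf a_neq0) (mulVKf a_neq0)).
case: ifP => [sq_i|nsq_i]; last by rewrite big_pred0 // => s; case: eqP => // ->.
by rewrite (big_pred1 (a^-1 * i)) // => s /=; case: eqP => // ->.
Qed.

Lemma theta_coef0l p l (g : 'F_p -> 'Z_l) k i : i != 0 -> theta_coef g 0 k i = 0.
Proof.
by move=> i_neq0; rewrite /theta_coef big_pred0 // => s; rewrite mul0r eq_sym (negbTE i_neq0) andbF.
Qed.

Lemma is_sq0 p : @is_sq p 0 = false.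
Proof. by rewrite /is_sq eqxx. Qed.

Lemma is_sq1 p : prime p -> @is_sq p 1.
Proof. by move=> pr_p; rewrite /is_sq oner_eq0; apply/existsP; exists 1; rewrite expr1n. Qed.

(* Otherwise squaring would be surjective, hence injective on the finite type
   F_p, although 1 and -1 have the same square. *)
Lemma exists_nonsq p : prime p -> (2 < p)%N -> exists j : 'F_p, (j != 0) && ~~ is_sq j.
Proof.
move=> pr_p p_gt2; apply/existsP; apply: contraT => /existsPn all_sq.
have sqrt_ex (j : 'F_p) : exists y : 'F_p, y ^+ 2 == j.
  have [->|j_neq0] := eqVneq j 0; first by exists 0; rewrite expr0n.
  by have := all_sq j; rewrite j_neq0 negbK => /andP[_ /existsP].
pose sqrt j := xchoose (sqrt_ex j).
have sqrtK : cancel sqrt (fun y => y ^+ 2) by move=> j; apply/eqP/(xchooseP (sqrt_ex j)).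
have [sqr _ sqr_sqrt] := injF_bij (can_inj sqrtK).
have : sqrt (sqr 1) = sqrt (sqr (-1)) by rewrite -[sqr 1]sqrtK -[sqr (-1)]sqrtK !sqr_sqrt sqrrN.
rewrite !sqr_sqrt => one_eqN1.
have : (1 + 1 : 'F_p) == 0 by rewrite addr_eq0 -one_eqN1.
by rewrite -val_eqE val_FpD // val_Fp1 // modn_small.
Qed.

Section EqualEigenvalues.
Variables (p l : nat) (alpha beta : 'F_p -> 'Z_l) (a : 'F_p) (k : 'Z_l).
Hypotheses (pr_p : prime p) (p_gt2 : (2 < p)%N) (pr_l : prime l) (l_neq_p : l != p).
Hypothesis theta_eq : theta alpha 1 1 = theta beta a k.

Let D i := theta_coef alpha 1 1 i - theta_coef beta a k i.

Let D_const j : D j = D 0.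
Proof.
apply: (sum_fixed_addchar_eq0 pr_p pr_l l_neq_p) => [i u u_zeta|].
  by rewrite rmorphB !theta_coef_fixed.
under eq_bigr do rewrite mulrBl.
by rewrite sumrB -!thetaE theta_eq subrr.
Qed.

Let theta_coef_alpha i :
  theta_coef alpha 1 1 i = if is_sq i then zeta l ^+ val (alpha i) else 0.
Proof. by rewrite theta_coef_unit ?oner_eq0 // invr1 !mul1r. Qed.

Lemma eq_theta_neq0 : a != 0.
Proof.
apply/negP => /eqP a0; have [j /andP[j_neq0 nsq_j]] := exists_nonsq pr_p p_gt2.
have : D 1 = D j by rewrite !D_const.
rewrite /D !theta_coef_alpha is_sq1 // (negbTE nsq_j) a0 !theta_coef0l ?oner_eq0 //.
by rewrite !subr0 => /eqP; rewrite (negbTE (zeta_expn_neq0 _ pr_l)).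
Qed.

Lemma eq_theta_dilation i :
  is_sq i = is_sq (a^-1 * i) /\ (is_sq i -> alpha i = k * beta (a^-1 * i)).
Proof.
have a_neq0 := eq_theta_neq0.
have : D i = D 0 := D_const i.
rewrite /D !theta_coef_alpha !theta_coef_unit // mulr0 !is_sq0 subrr.
move/eqP; rewrite subr_eq0 => /eqP.
case: (is_sq i) (is_sq (a^-1 * i)) => [] [] coef_eq.
- by split=> // _; apply: zeta_expn_Zp_inj coef_eq.
- by have := zeta_expn_neq0 (val (alpha i)) pr_l; rewrite coef_eq eqxx.
- by have := zeta_expn_neq0 (val (k * beta (a^-1 * i))) pr_l; rewrite -coef_eq eqxx.
- by [].
Qed.

Lemma eq_theta_unit : voltage alpha -> k \is a GRing.unit.
Proof.
case=> [[s [sq_s alpha_s]] _].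
apply: Zp_unit_prime pr_l _; apply: contraNneq alpha_s => k0.
by have [_ ->] := eq_theta_dilation s; rewrite ?k0 ?mul0r.
Qed.

End EqualEigenvalues.

Lemma graph_iso_comp (V : finType) (e1 e2 e3 : rel V) (f g : V -> V) :
  graph_iso e1 e2 f -> graph_iso e2 e3 g -> graph_iso e1 e3 (g \o f).
Proof.
case=> f_bij f_adj [g_bij g_adj]; split; first exact: bij_comp.
by move=> u v; rewrite f_adj g_adj.
Qed.

Lemma cover_iso_dilate p l (alpha gamma : 'F_p -> 'Z_l) (c : 'F_p) :
  c != 0 -> (forall s, is_sq s = is_sq (c * s)) ->
  (forall s, is_sq s -> alpha s = gamma (c * s)) ->
  cover_iso alpha gamma (fun x => (c * x.1, x.2)).
Proof.
move=> c_neq0 sq_dil alpha_dil; split=> //; split.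
  by exists (fun x => (c^-1 * x.1, x.2)) => [] [x i] /=; rewrite ?mulKf ?mulVKf.
move=> [x i] [y j]; rewrite /cover_adj /= -mulrBr -sq_dil.
by case sq: (is_sq (y - x)); rewrite //= alpha_dil.
Qed.

Lemma graph_iso_scale_voltage p l (beta : 'F_p -> 'Z_l) (n : 'Z_l) :
  n \is a GRing.unit ->
  graph_iso (cover_adj (scale_voltage n beta)) (cover_adj beta) (fun x => (x.1, n^-1 * x.2)).
Proof.
move=> n_unit; split.
  by exists (fun x => (x.1, n * x.2)) => [] [x i] /=; rewrite ?mulKr ?mulVKr.
move=> [x i] [y j]; rewrite /cover_adj /scale_voltage /= -mulrBr.
by congr (_ && _); apply/eqP/eqP => [->|<-]; rewrite ?mulKr ?mulVKr.
Qed.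

Theorem theorem1p1 (p l : nat) (alpha beta : 'F_p -> 'Z_l) :
  prime p -> (p %% 4 = 1)%N -> prime l -> l != p ->
  voltage alpha -> voltage beta ->
  perm_eq (spectrum alpha) (spectrum beta) ->
  (exists n : 'Z_l, n \is a GRing.unit /\
     exists f : 'F_p * 'Z_l -> 'F_p * 'Z_l,
       cover_iso alpha (scale_voltage n beta) f) /\
  (exists g : 'F_p * 'Z_l -> 'F_p * 'Z_l,
       graph_iso (cover_adj alpha) (cover_adj beta) g).
Proof.
move=> pr_p p_mod4 pr_l l_neq_p volt_alpha _ spec_eq.
have p_gt2 : (2 < p)%N.
  by move: (prime_gt1 pr_p) p_mod4; rewrite leq_eqVlt => /orP[/eqP <-|].
have /mapP[[a k] _ /= theta_eq] : theta alpha 1 1 \in spectrum beta.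
  by rewrite -(perm_mem spec_eq); apply/mapP; exists (1, 1); rewrite ?mem_enum.
have a_neq0 := eq_theta_neq0 pr_p p_gt2 pr_l l_neq_p theta_eq.
have dil := eq_theta_dilation pr_p p_gt2 pr_l l_neq_p theta_eq.
have k_unit := eq_theta_unit pr_p p_gt2 pr_l l_neq_p theta_eq volt_alpha.
have iso : cover_iso alpha (scale_voltage k beta) (fun x => (a^-1 * x.1, x.2)).
  by apply: cover_iso_dilate; rewrite ?invr_eq0 // => s; have [] := dil s.
split; first by exists k; split=> //; exists (fun x => (a^-1 * x.1, x.2)).
by eexists; apply: graph_iso_comp (iso.1) (graph_iso_scale_voltage beta k_unit).
Qed.
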